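(* Let $p\colon X\to B$ be a Boolean set. If $G$ is a proper filter in $(X,\le)$ then $p(G)$ is a proper filter in $B$.
   Context: Convention: a ''Boolean algebra'' means a generalized Boolean algebra (relatively complemented distributive lattice with $0$). Presheaf of sets over a meet semilattice $E$: pairwise disjoint sets $X_e$, restriction maps $x\mapsto x|^e_f$ for $e\ge f$ with $|^e_e=\mathrm{id}$ and $(x|^e_f)|^f_g=x|^e_g$; $p(x)=e$ iff $x\in X_e$; global support: all $X_e\neq\emptyset$. Order: $x\le y$ iff $p(x)\le p(y)$ and $x=y|^{p(y)}_{p(x)}$. Compatibility $x\sim y$: $x\wedge y$ exists and $p(x\wedge y)=p(x)\wedge p(y)$. A Boolean set is a presheaf $p\colon X\to B$ with global support over a Boolean algebra $B$ such that $(X,\le)$ has least element $0$, compatible pairs have joins, and $p(x)=0\Rightarrow x=0$. In a poset, a filter is a non-empty subset $F$ that is down directed ($a,b\in F$ implies some $c\in F$ with $c\le a,b$) and upwardly closed; it is proper if it is not the whole poset. *)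

From HB Require Import structures.
From mathcomp Require Import all_boot all_order.
Set Implicit Arguments. Unset Strict Implicit. Unset Printing Implicit Defensive.
Import Order.TTheory.
Local Open Scope order_scope.

(* "Boolean algebra" = generalized Boolean algebra = relatively complemented
   distributive lattice with 0 : MathComp's cbDistrLatticeType. *)

Section BooleanSets.
Context {d : Order.disp_t} {B : cbDistrLatticeType d} {X : Type}.
Variables (p : X -> B) (res : X -> B -> X).
(* res x f = x|^{p x}_f, meaningful only when f <= p x. *)

Definition is_presheaf : Prop :=
  (forall x f, f <= p x -> p (res x f) = f) /\
  (forall x, res x (p x) = x) /\
  (forall x f g, g <= f -> f <= p x -> res (res x f) g = res x g).

Definition global_support : Prop := forall e : B, exists x, p x = e.

Definition xle (x y : X) : Prop := p x <= p y /\ x = res y (p x).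

Definition is_glb (x y m : X) : Prop :=
  xle m x /\ xle m y /\ (forall z, xle z x -> xle z y -> xle z m).
Definition is_lub (x y j : X) : Prop :=
  xle x j /\ xle y j /\ (forall z, xle x z -> xle y z -> xle j z).

Definition compatible (x y : X) : Prop :=
  exists m, is_glb x y m /\ p m = p x `&` p y.

Definition boolean_set : Prop :=
  is_presheaf /\ global_support /\
  (exists z : X, (forall x, xle z x) /\ (forall x, p x = \bot -> x = z)) /\
  (forall x y, compatible x y -> exists j, is_lub x y j).
End BooleanSets.

Definition is_filter {T : Type} (le : T -> T -> Prop) (F : T -> Prop) : Prop :=
  (exists a, F a) /\
  (forall a b, F a -> F b -> exists c, F c /\ le c a /\ le c b) /\
  (forall a b, F a -> le a b -> F b).

Definition is_proper {T : Type} (F : T -> Prop) : Prop := exists a, ~ F a.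

Definition img {T U : Type} (f : T -> U) (G : T -> Prop) : U -> Prop :=
  fun u => exists x, G x /\ f x = u.

From HB Require Import structures.
From mathcomp Require Import all_boot all_order.
Import Order.TTheory Order.CBDistrLatticeTheory.
Local Open Scope order_scope.

(* Filter properties transfer along any monotone map [f] that can lift an
   inequality [f x <= b] to some [x <= y] with [f y = b].  The projection of a
   Boolean set has this lifting property: join [x] with an element lying over
   the relative complement [b \ p x] (the two are compatible, their meet being
   [0]) and restrict the join to [b].  Properness holds because a filter
   containing the least element [0] is everything, while only [0] lies over
   [\bot]. *)

Section FilterImage.
Variables (T U : Type) (leT : T -> T -> Prop) (leU : U -> U -> Prop).
Variable f : T -> U.
Hypothesis f_mono : forall x y, leT x y -> leU (f x) (f y).
Hypothesis f_lift : forall {x b}, leU (f x) b -> exists y, leT x y /\ f y = b.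

Lemma filter_img (F : T -> Prop) : is_filter leT F -> is_filter leU (img f F).
Proof.
case=> [[a Fa] [Fdir Fup]]; split; first by exists (f a), a.
split.
- move=> _ _ [x [Fx <-]] [y [Fy <-]].
  have [c [Fc [cx cy]]] := Fdir x y Fx Fy.
  by exists (f c); split; [exists c | split; apply: f_mono].
- move=> _ b [x [Fx <-]] xb.
  have [y [xy <-]] := f_lift xb.
  by exists y; split => //; apply: Fup xy.
Qed.

End FilterImage.

Lemma filter_bottom_full (T : Type) (le : T -> T -> Prop) (F : T -> Prop) z :
  is_filter le F -> (forall x, le z x) -> F z -> forall x, F x.
Proof. by case=> _ [_ Fup] zle Fz x; apply: Fup (zle x). Qed.

Section BooleanSetLift.
Variables (d : Order.disp_t) (B : cbDistrLatticeType d) (X : Type).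
Variables (p : X -> B) (res : X -> B -> X).
Hypothesis p_res : forall x f, f <= p x -> p (res x f) = f.
Hypothesis res_res :
  forall x f g, g <= f -> f <= p x -> res (res x f) g = res x g.
Variable z : X.
Hypothesis z_least : forall x, xle p res z x.
Hypothesis p_eq0 : forall x, p x = \bot -> x = z.

Lemma xle_res x y f : xle p res x y -> p x <= f -> f <= p y ->
  xle p res x (res y f).
Proof. by move=> [_ xE] xf fy; split; rewrite ?p_res // res_res // -xE. Qed.

Lemma compatible_disjoint x y : p x `&` p y = \bot -> compatible p res x y.
Proof.
move=> xy0; exists z; rewrite xy0.
have pz : p z = \bot.
  by apply/eqP; rewrite -lex0 -xy0 lexI (z_least x).1 (z_least y).1.
split=> //; split; first exact: z_least.
split; first exact: z_least.
move=> w [wx _] [wy _]; rewrite (p_eq0 w) ?z_least //.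
by apply/eqP; rewrite -lex0 -xy0 lexI wx wy.
Qed.

Hypothesis global : global_support p.
Hypothesis join_compatible :
  forall x y, compatible p res x y -> exists j, is_lub p res x y j.

Lemma xle_lift x b : p x <= b -> exists y, xle p res x y /\ p y = b.
Proof.
move=> xb; have [y py] := global (b `\` p x).
have [j [[xj1 xj2] [[yj _] _]]] : exists j, is_lub p res x y j.
  by apply/join_compatible/compatible_disjoint; rewrite py diffKI.
have bj : b <= p j by rewrite -(leBUK xb) leUx -py yj xj1.
by exists (res j b); split; [apply: xle_res | rewrite p_res].
Qed.

End BooleanSetLift.

Theorem lemma3p3 (d : Order.disp_t) (B : cbDistrLatticeType d) (X : Type)
  (p : X -> B) (res : X -> B -> X) (HB : boolean_set p res)
  (G : X -> Prop) (HG : is_filter (xle p res) G) (HGp : is_proper G) :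
  is_filter (fun a b : B => a <= b) (img p G) /\ is_proper (img p G).
Proof.
case: HB => [[p_res [_ res_res]] [global [[z [z_least p_eq0]] join_compatible]]].
split.
- apply: filter_img HG; first by move=> x y [].
  exact: xle_lift p_res res_res z z_least p_eq0 global join_compatible.
- exists \bot => -[x [Gx /p_eq0 xz]].
  case: HGp => y; apply; apply: filter_bottom_full HG z_least _ y.
  by rewrite -xz.
Qed.
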